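(* Let $N\ge 2$ and $\Omega$ the set of nonempty subsets of $\{1,\dots,N\}$. The Markov chain $R$ on $\Omega$ defined below is reversible with stationary distribution $\mathcal{M}(S)=3^{|S|}/(4^N-1)$ and has spectral gap $\lambda_R\ge \frac{1}{3N}$.
   Context: Chain $R$ on $\Omega$: from state $B$, choose $j\in\{1,\dots,N\}$ uniformly at random. If $j\in B$ and $|B|\ge2$, move to $B\setminus\{j\}$ with probability $1/3$ and stay at $B$ with probability $2/3$. If $j\in B$ and $|B|=1$, stay at $B$. If $j\notin B$, move to $B\cup\{j\}$. The spectral gap is $1$ minus the second largest eigenvalue of the transition matrix. *)

From HB Require Import structures.
From mathcomp Require Import all_boot all_order all_algebra.
From mathcomp Require Import polyrcf.
From mathcomp Require Import reals.
Set Implicit Arguments. Unset Strict Implicit. Unset Printing Implicit Defensive.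
Import Order.TTheory GRing.Theory Num.Theory.
Local Open Scope ring_scope.

(* State space: nonempty subsets of {1..N}, modelled as 'I_N. *)
Definition Omega (N : nat) := {B : {set 'I_N} | B != set0}.

Definition step (R : fieldType) (N : nat) (B : Omega N) (j : 'I_N) (B' : Omega N) : R :=
  let b := val B in let b' := val B' in
  if j \in b then
    (if (2 <= #|b|)%N then (1/3 : R) * (b' == b :\ j)%:R + (2/3 : R) * (b' == b)%:R
     else (b' == b)%:R)
  else (b' == j |: b)%:R.

Definition Rchain (R : fieldType) (N : nat) (B B' : Omega N) : R :=
  (N%:R)^-1 * \sum_(j : 'I_N) step R B j B'.

Definition Rmatrix (R : fieldType) (N : nat) : 'M[R]_#|{: Omega N}| :=
  \matrix_(i, k) Rchain R (enum_val i) (enum_val k).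

Definition Mdist (R : fieldType) (N : nat) (S : Omega N) : R :=
  (3 ^ #|val S|)%:R / ((4 ^ N)%:R - 1).

(* Real eigenvalues of A (roots of the characteristic polynomial), listed with
   algebraic multiplicity, in nonincreasing order. *)
Definition eigs_desc (R : rcfType) (n : nat) (A : 'M[R]_n) : seq R :=
  let p := char_poly A in
  sort (fun x y : R => y <= x) (flatten [seq nseq (mup x p) x | x <- rootsR p]).

Definition second_eig (R : rcfType) (n : nat) (A : 'M[R]_n) : R :=
  nth 0 (eigs_desc A) 1.

Definition spectral_gap (R : rcfType) (n : nat) (A : 'M[R]_n) : R :=
  1 - second_eig A.

From HB Require Import structures.
From mathcomp Require Import all_boot all_order all_algebra.
From mathcomp Require Import polyrcf.
From mathcomp Require Import reals.
From mathcomp Require Import ring lra.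
Import Order.TTheory GRing.Theory Num.Theory.
Local Open Scope ring_scope.

Set Implicit Arguments. Unset Strict Implicit. Unset Printing Implicit Defensive.

(* The weight 3^|S| is the product measure giving each coordinate weight 3 when
   present and 1 when absent.  Adding j multiplies it by 3 while removing j has
   probability 1/3, so detailed balance holds coordinate by coordinate; stationarity
   follows.  For the gap, the eigenvalue 1 is split off by a rank-one deflation.  By
   reversibility a left eigenvector v orthogonal to the constants gives a right
   eigenfunction g = v / 3^|S| of mean zero, extended by g(empty) = 0.  Tensorisation
   of variance for the product weights (a Poincare inequality, proved by induction on
   the ground set) gives 4 E(g) <= 3 D(g), where D counts every edge S -> S + j,
   including those leaving the empty set; the latter contribute sum_j g({j})^2, at
   most E(g)/3 since singletons carry weight 3.  So the chain's Dirichlet form is at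
   least E(g), and every eigenvalue other than 1 is at most 1 - 1/N. *)

Lemma set_ind (T : finType) (P : {set T} -> Prop) : P set0 ->
  (forall (C : {set T}) k, k \notin C -> P C -> P (k |: C)) -> forall C, P C.
Proof.
move=> P0 PU1 C; move En: #|C| => n; elim: n C En => [|n IH] C En.
  by move/eqP: En; rewrite cards_eq0 => /eqP ->.
have /set0Pn[k kC] : C != set0 by rewrite -card_gt0 En.
rewrite -(setD1K kC); apply: PU1; first by rewrite setD11.
by apply: IH; move: En; rewrite (cardsD1 k) kC add1n => -[].
Qed.

Section SubsetSums.
Variables (T : finType) (V : nmodType).
Implicit Types (C S : {set T}) (F : {set T} -> V).

Lemma big_subset0 F : \sum_(S : {set T} | S \subset set0) F S = F set0.
Proof. by rewrite (eq_bigl (pred1 set0)) ?big_pred1_eq // => S; rewrite subset0. Qed.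

Lemma big_subsetT F : \sum_(S : {set T} | S \subset [set: T]) F S = \sum_S F S.
Proof. by apply: eq_bigl => S; rewrite subsetT. Qed.

Lemma big_subsetU1 C k F : k \notin C ->
  \sum_(S : {set T} | S \subset k |: C) F S = \sum_(S : {set T} | S \subset C) (F S + F (k |: S)).
Proof.
move=> kC; rewrite big_split (bigID (fun S => k \in S)) /= addrC; congr (_ + _).
  by apply: eq_bigl => S; rewrite -[in RHS](setU1K kC) subsetD1.
rewrite (reindex_onto (fun S => k |: S) (fun S => S :\ k)) /=; last first.
  by move=> S /andP[_ kS]; rewrite setD1K.
apply: eq_bigl => S; rewrite setU11 andbT; apply/andP/idP => [[sSC /eqP <-]|sSC].
  by rewrite -(setU1K kC) setSD.
have kS : k \notin S by apply: contra kC => /(subsetP sSC).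
by rewrite setU1K // setUS.
Qed.

End SubsetSums.

Lemma weighted_cauchy_schwarz (R : realFieldType) (I : finType) (P : pred I)
    (w f : I -> R) : (forall i, P i -> 0 <= w i) ->
  (\sum_(i | P i) w i * f i) ^+ 2 <= (\sum_(i | P i) w i) * \sum_(i | P i) w i * f i ^+ 2.
Proof.
move=> w_ge0; set W := \sum_(i | P i) w i; set A := \sum_(i | P i) _; set Q := \sum_(i | P i) _.
have [W0 | W_gt0] := eqVneq W 0.
  have {}w0 i : P i -> w i = 0 by apply/(psumr_eq0P w_ge0).
  by rewrite /A big1 ?W0 ?expr2 ?mul0r // => i /w0->; rewrite mul0r.
have W_ge0 : 0 <= W by apply: sumr_ge0.
have : 0 <= W * (W * Q - A ^+ 2).
  have -> : W * (W * Q - A ^+ 2) = \sum_(i | P i) w i * (W * f i - A) ^+ 2.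
    transitivity (\sum_(i | P i)
        (W ^+ 2 * (w i * f i ^+ 2) - 2 * W * A * (w i * f i) + A ^+ 2 * w i)).
      by rewrite big_split sumrB /= -!mulr_sumr -/W -/A -/Q; ring.
    by apply: eq_bigr => i _; ring.
  by apply: sumr_ge0 => i Pi; rewrite mulr_ge0 ?w_ge0 ?sqr_ge0.
by rewrite pmulr_rge0 ?lt_def ?W_gt0 // subr_ge0.
Qed.

Section Weights.
Variables (R : numDomainType) (T : finType).
Implicit Types (C S : {set T}).

Definition wt S : R := (3 ^ #|S|)%:R.

Lemma wt_gt0 S : 0 < wt S.
Proof. by rewrite ltr0n expn_gt0. Qed.

Lemma wt_ge0 S : 0 <= wt S.
Proof. exact/ltW/wt_gt0. Qed.

Lemma wt_setU1 S j : j \notin S -> wt (j |: S) = 3 * wt S.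
Proof. by move=> jS; rewrite /wt cardsU1 jS add1n expnS natrM. Qed.

Lemma sum_wt_subset C : \sum_(S : {set T} | S \subset C) wt S = 4 ^+ #|C|.
Proof.
elim/set_ind: C => [|C k kC IH]; first by rewrite big_subset0 /wt cards0 expr0.
rewrite big_subsetU1 // cardsU1 kC add1n exprS -IH mulr_sumr.
by apply: eq_bigr => S sSC; rewrite wt_setU1; [ring | apply: contra kC => /(subsetP sSC)].
Qed.

End Weights.

Arguments wt {R T} S.

Section Poincare.
Variables (R : realFieldType) (T : finType).
Implicit Types (C S : {set T}) (g : {set T} -> R).

Definition mass C g := \sum_(S : {set T} | S \subset C) wt S * g S.
Definition energy C g := \sum_(S : {set T} | S \subset C) wt S * g S ^+ 2.
Definition edge_energy C g j :=
  \sum_(S : {set T} | S \subset C) (if j \in S then 0 else wt S * (g (j |: S) - g S) ^+ 2).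
Definition dirichlet C g := \sum_(j in C) edge_energy C g j.

Lemma mass_cauchy_schwarz C g : mass C g ^+ 2 <= 4 ^+ #|C| * energy C g.
Proof. by rewrite -sum_wt_subset; apply: weighted_cauchy_schwarz => S _; apply: wt_ge0. Qed.

Section SplitLastCoordinate.
Variables (C : {set T}) (k : T).
Hypothesis kC : k \notin C.

Lemma notin_subset S : S \subset C -> k \notin S.
Proof. by move=> sSC; apply: contra kC => /(subsetP sSC). Qed.

Lemma mass_setU1 g : mass (k |: C) g = mass C g + 3 * mass C (fun S => g (k |: S)).
Proof.
rewrite /mass big_subsetU1 // big_split mulr_sumr; congr (_ + _).
by apply: eq_bigr => S /notin_subset kS; rewrite wt_setU1 ?mulrA.
Qed.

Lemma energy_setU1 g : energy (k |: C) g = energy C g + 3 * energy C (fun S => g (k |: S)).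
Proof.
rewrite /energy big_subsetU1 // big_split mulr_sumr; congr (_ + _).
by apply: eq_bigr => S /notin_subset kS; rewrite wt_setU1 ?mulrA.
Qed.

Lemma dirichlet_setU1 g : dirichlet (k |: C) g =
  energy C (fun S => g (k |: S) - g S) + dirichlet C g + 3 * dirichlet C (fun S => g (k |: S)).
Proof.
rewrite /dirichlet big_setU1 //= -addrA; congr (_ + _).
  rewrite /edge_energy big_subsetU1 //; apply: eq_bigr => S /notin_subset kS.
  by rewrite (negPf kS) setU11 addr0.
rewrite mulr_sumr -big_split /=; apply: eq_bigr => j jC.
rewrite /edge_energy big_subsetU1 // mulr_sumr -big_split /=.
apply: eq_bigr => S /notin_subset kS.
have jk : j != k by apply: contraTneq jC => ->.
rewrite in_setU1 (negPf jk) /=; case: (j \in S); first by rewrite !mulr0 addr0.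
by rewrite wt_setU1 // setUCA; ring.
Qed.

End SplitLastCoordinate.

Lemma poincare_subsets C g :
  4 * (4 ^+ #|C| * energy C g - mass C g ^+ 2) <= 3 * 4 ^+ #|C| * dirichlet C g.
Proof.
elim/set_ind: C g => [|C k kC IH] g.
  rewrite /energy /mass /dirichlet !big_subset0 big_set0 cards0 /wt cards0 expr0; lra.
rewrite energy_setU1 // mass_setU1 // dirichlet_setU1 // cardsU1 kC add1n exprS.
set g1 := fun S => g (k |: S).
have IH0 := IH g; have IH1 := IH g1.
have CS := mass_cauchy_schwarz C (fun S => g1 S - g S).
have mass_diff : mass C (fun S => g1 S - g S) = mass C g1 - mass C g.
  by rewrite /mass -sumrB; apply: eq_bigr => S _; ring.
rewrite mass_diff in CS; move: IH0 IH1 CS.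
set W := 4 ^+ #|C|; set E0 := energy C g; set E1 := energy C g1;
  set A0 := mass C g; set A1 := mass C g1; set Ed := energy C _;
  set D0 := dirichlet C g; set D1 := dirichlet C g1 => IH0 IH1 CS.
nra.
Qed.

Lemma sum_singletons_le_energy g :
  3 * \sum_(j : T) g [set j] ^+ 2 <= energy [set: T] g.
Proof.
have -> : 3 * \sum_(j : T) g [set j] ^+ 2 = \sum_(j in T) wt [set j] * g [set j] ^+ 2.
  by rewrite mulr_sumr; apply: eq_bigr => j _; rewrite /wt cards1 expn1.
rewrite -(big_imset (fun S => wt S * g S ^+ 2) (in2W set1_inj)) /= /energy big_subsetT.
rewrite [X in _ <= X](bigID (mem [set [set j] | j in T])) /= lerDl.
by apply: sumr_ge0 => S _; rewrite mulr_ge0 ?wt_ge0 ?sqr_ge0.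
Qed.

End Poincare.

Section Chain.
Variables (R : numFieldType) (N : nat).
Implicit Types (a b S : Omega N) (T U : {set 'I_N}) (h : {set 'I_N} -> R).

Lemma sum_Omega (F : {set 'I_N} -> R) :
  \sum_(S : Omega N) F (val S) = \sum_(T | T != set0) F T.
Proof. by rewrite (big_sub (fun T : {set 'I_N} => T != set0)). Qed.

Lemma sum_Omega_all (F : {set 'I_N} -> R) : F set0 = 0 ->
  \sum_(S : Omega N) F (val S) = \sum_T F T.
Proof. by move=> F0; rewrite sum_Omega [RHS](bigD1 set0) //= F0 add0r. Qed.

Lemma sum_Omega_delta T0 h : T0 != set0 ->
  \sum_(S : Omega N) (val S == T0)%:R * h (val S) = h T0.
Proof.
move=> T0_neq0; rewrite (sum_Omega (fun T => (T == T0)%:R * h T)) (bigD1 T0) //=.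
by rewrite eqxx mul1r big1 ?addr0 // => T /andP[_ /negPf->]; rewrite mul0r.
Qed.

Definition step_mean h T j : R :=
  if j \in T then (if (2 <= #|T|)%N then 1/3 * h (T :\ j) + 2/3 * h T else h T)
  else h (j |: T).

Lemma step_meanE S j h :
  \sum_(S' : Omega N) step R S j S' * h (val S') = step_mean h (val S) j.
Proof.
have S_neq0 : val S != set0 := valP S.
rewrite /step /step_mean; case: ifP => jS; last first.
  by rewrite sum_Omega_delta //; apply/set0Pn; exists j; rewrite setU11.
case: ifP => [S_ge2|_]; last by rewrite sum_Omega_delta.
under eq_bigr do rewrite mulrDl -!mulrA.
rewrite big_split /= -!mulr_sumr !sum_Omega_delta ?mulrA //.
by move: S_ge2; rewrite (cardsD1 j) jS add1n ltnS card_gt0.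
Qed.

Lemma Rchain_meanE S h :
  \sum_(S' : Omega N) Rchain R S S' * h (val S') = N%:R^-1 * \sum_j step_mean h (val S) j.
Proof.
rewrite /Rchain; under eq_bigr do rewrite -mulrA; rewrite -mulr_sumr; congr (_ * _).
under eq_bigr do rewrite mulr_suml; rewrite exchange_big; apply: eq_bigr => j _.
exact: step_meanE.
Qed.

Lemma Rchain_row_sum S : (0 < N)%N -> \sum_(S' : Omega N) Rchain R S S' = 1.
Proof.
move=> N_gt0; have := Rchain_meanE S (fun _ => 1); under eq_bigr do rewrite mulr1.
move=> ->; rewrite (eq_bigr (fun _ => 1)) => [|j _]; last first.
  by rewrite /step_mean; case: ifP => // _; case: ifP => // _; rewrite !mulr1; field.
by rewrite sumr_const card_ord mulVf // pnatr_eq0 -lt0n.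
Qed.

Definition grows j T U := (j \notin T) && (U == j |: T).

Lemma wt_grows j T U : grows j T U -> wt U = 3 * wt T :> R.
Proof. by case/andP=> jT /eqP->; rewrite wt_setU1. Qed.

Lemma grows_asym j T U : grows j T U -> ~~ grows j U T.
Proof. by case/andP=> _ /eqP->; rewrite /grows setU11. Qed.

Lemma step_neq a b j : a != b ->
  step R a j b = 3^-1 * (grows j (val b) (val a))%:R + (grows j (val a) (val b))%:R.
Proof.
move=> ab; have ba : (val b == val a) = false by rewrite val_eqE eq_sym (negPf ab).
rewrite /step /grows; case: (boolP (j \in val a)) => ja /=; last first.
  suff -> : (val a == j |: val b) = false by rewrite andbF mulr0 add0r.
  by apply/negbTE; apply: contra ja => /eqP->; rewrite setU11.
have shrink : (j \notin val b) && (val a == j |: val b) = (val b == val a :\ j).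
  apply/andP/eqP => [[jb /eqP->]|->]; first by rewrite setU1K.
  by rewrite setD11 setD1K.
rewrite shrink ba addr0 mulr0 addr0 div1r; case: ifP => // a_lt2.
suff -> : (val b == val a :\ j) = false by rewrite mulr0.
apply/negbTE; apply: contraNneq (valP b) => ->.
by rewrite -cards_eq0; move: a_lt2; rewrite (cardsD1 j) ja add1n ltnS lt0n => /negbFE.
Qed.

Lemma wt_step_sym a b j : wt (val a) * step R a j b = wt (val b) * step R b j a.
Proof.
have [->//|ab] := eqVneq a b.
rewrite step_neq // step_neq 1?eq_sym //.
case: (boolP (grows j (val b) (val a))) => [ba | _].
  by rewrite (negPf (grows_asym ba)) (wt_grows ba) mulr1n mulr0n; field.
case: (boolP (grows j (val a) (val b))) => [ab' | _]; last by rewrite !mulr0n; ring.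
by rewrite (wt_grows ab') mulr1n mulr0n; field.
Qed.

Lemma wt_Rchain_sym a b : wt (val a) * Rchain R a b = wt (val b) * Rchain R b a.
Proof.
rewrite /Rchain mulrCA [RHS]mulrCA !mulr_sumr.
by apply: eq_bigr => j _; rewrite wt_step_sym.
Qed.

Lemma MdistE S : Mdist R S = wt (val S) / ((4 ^ N)%:R - 1).
Proof. by []. Qed.

Lemma Mdist_ge0 S : 0 <= Mdist R S.
Proof. by rewrite divr_ge0 ?wt_ge0 // subr_ge0 ler1n expn_gt0. Qed.

Lemma Mdist_Rchain_sym a b : Mdist R a * Rchain R a b = Mdist R b * Rchain R b a.
Proof. by rewrite !MdistE mulrAC wt_Rchain_sym mulrAC. Qed.

Lemma sum_Mdist : (0 < N)%N -> \sum_(S : Omega N) Mdist R S = 1.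
Proof.
move=> N_gt0; rewrite -mulr_suml (sum_Omega wt).
have := sum_wt_subset R [set: 'I_N]; rewrite big_subsetT cardsT card_ord (bigD1 set0) //=.
rewrite /wt cards0 expn0 -natrX => /(canRL (addKr _)) ->.
by rewrite addrC divff // subr_eq0 pnatr_eq1 -(expn0 4) eqn_exp2l // -lt0n.
Qed.

Lemma Mdist_stationary S' : (0 < N)%N ->
  \sum_(S : Omega N) Mdist R S * Rchain R S S' = Mdist R S'.
Proof.
move=> N_gt0; under eq_bigr do rewrite Mdist_Rchain_sym.
by rewrite -mulr_sumr Rchain_row_sum // mulr1.
Qed.

End Chain.

(* Scaled by [a] so that no inverse is needed: it is used with [a = 'X] in [{poly F}]. *)
Lemma det_scalar_sub_rank1 (R : comNzRingType) n (a : R) (u : 'cV[R]_n) (w : 'rV[R]_n) :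
  a * \det (a%:M - u *m w) = a ^+ n * (a - (w *m u) 0 0).
Proof.
pose M := block_mx (a%:M : 'M_n) u w (1%:M : 'M_1).
have M_ulfact : M = block_mx 1%:M u 0 1%:M *m block_mx (a%:M - u *m w) 0 w 1%:M.
  by rewrite mulmx_block !mul1mx !mul0mx ?mulmx0 !mulmx1 ?addr0 ?add0r subrK.
have M_lufact : block_mx 1%:M 0 (-w) (a%:M) *m M = block_mx (a%:M) u 0 (a%:M - w *m u).
  rewrite mulmx_block !mul1mx !mul0mx ?add0r ?addr0 ?mul_scalar_mx ?mul_mx_scalar.
  by rewrite scalerN addNr scalemx1 mulNmx addrC.
have detM : \det M = \det (a%:M - u *m w).
  by rewrite M_ulfact det_mulmx det_ublock det_lblock !det1 !mul1r mulr1.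
have := congr1 determinant M_lufact.
rewrite det_mulmx det_lblock det_ublock det1 mul1r det_scalar1 detM det_scalar.
by rewrite det_mx11 !mxE eqxx mulr1n => ->.
Qed.

Lemma char_poly_deflate (F : fieldType) n (P : 'M[F]_n) (u : 'cV[F]_n) (w : 'rV[F]_n) :
  P *m u = u -> w *m u = 1%:M -> 'X * char_poly P = ('X - 1) * char_poly (P - u *m w).
Proof.
move=> Pu wu; set B := P - u *m w.
have BJ : B *m (u *m w) = 0.
  by rewrite mulmxBl !mulmxA Pu -(mulmxA u w u) wu mulmx1 subrr.
have charmx_factor : ('X%:M - map_mx polyC B) *m ('X%:M - map_mx polyC (u *m w)) =
    'X *: ('X%:M - map_mx polyC P).
  rewrite mulmxBl !mulmxBr -!map_mxM BJ map_mx0 subr0 ?mul_scalar_mx ?mul_mx_scalar.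
  have -> : map_mx polyC P = map_mx polyC B + map_mx polyC (u *m w).
    by rewrite -map_mxD /B subrK.
  by rewrite scalerBr scalerDr opprD addrA addrAC.
have det_rank1 := det_scalar_sub_rank1 'X (map_mx polyC u) (map_mx polyC w).
rewrite -!map_mxM wu mxE mxE eqxx mulr1n rmorph1 in det_rank1.
have det_factor := congr1 determinant charmx_factor.
rewrite det_mulmx detZ in det_factor.
rewrite /char_poly /char_poly_mx; move: det_factor det_rank1.
set dB := \det (_ - map_mx _ B); set dP := \det ('X%:M - _) => det_factor det_rank1.
have Xn_neq0 : ('X : {poly F}) ^+ n != 0 by rewrite expf_neq0 // polyX_eq0.
apply/(mulfI Xn_neq0).
rewrite mulrA (mulrC _ 'X) -mulrA -det_factor mulrA (mulrC _ dB) -mulrA det_rank1.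
by rewrite mulrCA [dB * _]mulrC.
Qed.

Section SecondEigenvalue.
Variables (R : rcfType) (n : nat) (A : 'M[R]_n) (c : R).
Hypothesis roots_gt : forall x, root (char_poly A) x -> c < x -> x = 1.

Lemma count_eigs_gt : (count (fun x => (c < x)%R) (eigs_desc A) <= mup 1 (char_poly A))%N.
Proof.
set p := char_poly A; set r := rootsR p.
have root_r x : x \in r -> root p x by apply: root_roots.
have count_r : (count (fun x => (c < x)%R) r <= 1)%N.
  rewrite -size_filter (@uniq_leq_size _ _ [:: 1]) ?filter_uniq ?uniq_roots //.
  by move=> x; rewrite mem_filter => /andP[cx /root_r/roots_gt/(_ cx)->]; apply: mem_head.
rewrite /eigs_desc -/p -/r count_sort count_flatten -map_comp sumnE big_map.
rewrite (eq_big_seq (fun x => if (c < x)%R then mup 1 p else 0%N)) => [|x /root_r rx]; last first.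
  by rewrite /= count_nseq; case: ifP => [/(roots_gt rx)->|]; rewrite ?mul1n.
rewrite -big_mkcond big_const_seq iter_addn_0 -[leqRHS]muln1 leq_mul2l.
by rewrite count_r orbT.
Qed.

Lemma second_eig_le : 0 <= c -> (mup 1 (char_poly A) <= 1)%N -> second_eig A <= c.
Proof.
move=> c_ge0 mup1.
have count_le1 := leq_trans count_eigs_gt mup1.
have : sorted (fun x y : R => y <= x) (eigs_desc A).
  by apply: sort_sorted => x y; apply: le_total.
rewrite /second_eig; move: count_le1; case: (eigs_desc A) => [|a [|b t]] //= count_le1.
case/andP=> b_le_a _; rewrite leNgt; apply/negP => cb.
by rewrite cb (lt_le_trans cb b_le_a) in count_le1.
Qed.

End SecondEigenvalue.

Section EnergyEstimates.
Variables (R : realFieldType) (N : nat).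
Implicit Types (g : {set 'I_N} -> R) (U : {set 'I_N}).

Lemma step_mean_pair g j U : g set0 = 0 -> j \notin U ->
  wt U * g U * (g U - step_mean g U j)
    + wt (j |: U) * g (j |: U) * (g (j |: U) - step_mean g (j |: U) j)
  = wt U * (g (j |: U) - g U) ^+ 2 - (U == set0)%:R * g [set j] ^+ 2.
Proof.
move=> g0 jU; rewrite /step_mean (negPf jU) setU11 setU1K // cardsU1 jU add1n ltnS.
rewrite lt0n cards_eq0; case: eqP => [->|_] /=.
  by rewrite g0 setU0 /wt cards0 expn0 mulr1n; ring.
by rewrite wt_setU1 // mulr0n; field.
Qed.

Lemma sum_step_mean_gap g j : g set0 = 0 ->
  \sum_(S : Omega N) wt (val S) * g (val S) * (g (val S) - step_mean g (val S) j)
  = edge_energy [set: 'I_N] g j - g [set j] ^+ 2.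
Proof.
move=> g0; rewrite (sum_Omega_all (F := fun T => wt T * g T * (g T - step_mean g T j))); last first.
  by rewrite g0 mulr0 mul0r.
rewrite (bigID (fun T : {set 'I_N} => j \in T)) /=.
rewrite (reindex_onto (fun U : {set 'I_N} => j |: U) (fun T => T :\ j)) /=; last first.
  by move=> T jT; rewrite setD1K.
rewrite (eq_bigl (fun U : {set 'I_N} => j \notin U)) => [|U]; last first.
  by rewrite setU11 /=; apply/eqP/idP => [<-|jU]; [rewrite setD11 | rewrite setU1K].
rewrite addrC -big_split /= (eq_bigr _ (fun U => step_mean_pair g0)) sumrB.
rewrite /edge_energy big_subsetT; congr (_ - _).
  by rewrite big_mkcond; apply: eq_bigr => U _; case: (j \in U).
rewrite (bigD1 set0) ?in_set0 //= eqxx mul1r big1 ?addr0 // => U /andP[_ /negPf->].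
by rewrite mul0r.
Qed.

Lemma energy_le_edge_sum g : g set0 = 0 -> mass [set: 'I_N] g = 0 ->
  energy [set: 'I_N] g <= \sum_j (edge_energy [set: 'I_N] g j - g [set j] ^+ 2).
Proof.
move=> g0 g_mass0; have := sum_singletons_le_energy g.
have := poincare_subsets [set: 'I_N] g.
rewrite g_mass0 expr2 mulr0 subr0 cardsT card_ord sumrB /dirichlet.
rewrite (eq_bigl xpredT) => [|j]; last exact: in_setT.
have : (0 : R) < 4 ^+ N by rewrite exprn_gt0.
nra.
Qed.

Lemma eigenfunction_le g x : (0 < N)%N -> g set0 = 0 -> mass [set: 'I_N] g = 0 ->
  (exists T, g T != 0) ->
  (forall S : Omega N, N%:R^-1 * \sum_j step_mean g (val S) j = x * g (val S)) ->
  x <= 1 - N%:R^-1.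
Proof.
move=> N_gt0 g0 g_mass0 [T0 gT0] eig.
set V := energy [set: 'I_N] g.
have V_gt0 : 0 < V.
  rewrite /V /energy big_subsetT (bigD1 T0) //= ltr_pwDl //.
    by rewrite mulr_gt0 ?wt_gt0 // lt_def sqr_ge0 sqrf_eq0 gT0.
  by apply: sumr_ge0 => T _; rewrite mulr_ge0 ?wt_ge0 ?sqr_ge0.
have N_neq0 : (N%:R : R) != 0 by rewrite pnatr_eq0 -lt0n.
have gap : (1 - x) * V = N%:R^-1 * \sum_j (edge_energy [set: 'I_N] g j - g [set j] ^+ 2).
  have -> : (1 - x) * V =
      \sum_(S : Omega N) wt (val S) * g (val S) * (g (val S) - x * g (val S)).
    rewrite /V /energy big_subsetT mulr_sumr -(sum_Omega_all (F := fun T => _ * (wt T * g T ^+ 2))).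
      by apply: eq_bigr => S _; ring.
    by rewrite g0 expr2 !mulr0.
  under eq_bigr do rewrite -eig.
  under [in RHS]eq_bigr do rewrite -sum_step_mean_gap //.
  rewrite exchange_big mulr_sumr; apply: eq_bigr => S _.
  rewrite -mulr_sumr sumrB sumr_const card_ord -mulr_natr.
  by field.
have : N%:R^-1 * V <= (1 - x) * V.
  by rewrite gap ler_pM2l ?invr_gt0 ?ltr0n // energy_le_edge_sum.
by rewrite ler_pM2r //; lra.
Qed.

End EnergyEstimates.

Section SpectralGap.
Variables (R : rcfType) (N : nat).
Hypothesis N_gt0 : (0 < N)%N.
Local Notation n := #|{: Omega N}|.
Local Notation P := (Rmatrix R N).
Local Notation ones := (const_mx 1 : 'cV[R]_n).
Local Notation Mrow := (\row_i Mdist R (enum_val i) : 'rV[R]_n).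

Lemma sum_enum_Omega (F : Omega N -> R) : \sum_(i < n) F (enum_val i) = \sum_S F S.
Proof. by rewrite -big_enum_val. Qed.

Lemma Rmatrix_ones : P *m ones = ones.
Proof.
apply/matrixP => i j; rewrite !mxE; under eq_bigr do rewrite !mxE mulr1.
by rewrite (sum_enum_Omega (Rchain R (enum_val i))) Rchain_row_sum.
Qed.

Lemma Mrow_ones : Mrow *m ones = 1%:M.
Proof.
apply/matrixP => i j; rewrite !ord1 !mxE eqxx; under eq_bigr do rewrite !mxE mulr1.
by rewrite (sum_enum_Omega (@Mdist R N)) sum_Mdist.
Qed.

Lemma left_eig_le (v : 'rV[R]_n) x : v *m P = x *: v -> v *m ones = 0 -> v != 0 ->
  x <= 1 - N%:R^-1.
Proof.
move=> vP v_ones v_neq0.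
pose g (T : {set 'I_N}) : R := if insub T is Some B then v 0 (enum_rank B) / wt T else 0.
have vE (B : Omega N) : v 0 (enum_rank B) = wt (val B) * g (val B).
  by rewrite /g valK mulrC divfK // gt_eqF // wt_gt0.
have g0 : g set0 = 0 by rewrite /g insubF // eqxx.
apply: (eigenfunction_le (g := g)) => //.
- rewrite /mass big_subsetT -(sum_Omega_all (F := fun T => wt T * g T)); last first.
    by rewrite g0 mulr0.
  transitivity ((v *m ones) 0 0); last by rewrite v_ones mxE.
  rewrite mxE -sum_enum_Omega; apply: eq_bigr => i _.
  by rewrite -vE enum_valK mxE mulr1.
- have [k vk] : exists k, v 0 k != 0.
    apply/existsP; apply: contraNT v_neq0 => /existsPn v0.
    by apply/eqP/rowP => k; rewrite mxE; apply/eqP/negbNE/v0.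
  exists (val (enum_val k)); apply: contraNneq vk => gk.
  by rewrite -(enum_valK k) vE gk mulr0.
move=> S; apply: (mulfI (lt0r_neq0 (wt_gt0 R (val S)))).
rewrite [RHS]mulrCA -vE -Rchain_meanE mulr_sumr.
have := congr1 (fun M : 'rV[R]_n => M 0 (enum_rank S)) vP; rewrite !mxE => <-.
rewrite -sum_enum_Omega; apply: eq_bigr => i _.
by rewrite mxE enum_rankK mulrA wt_Rchain_sym mulrAC -vE enum_valK.
Qed.

Lemma deflated_eig_le x : eigenvalue (P - ones *m Mrow) x -> x <= 1 - N%:R^-1.
Proof.
case/eigenvalueP => v vB v_neq0.
have Ninv_le1 : (N%:R^-1 : R) <= 1 by rewrite invf_le1 ?ltr0n // ler1n.
have [x_le0|x_gt0] := lerP x 0; first lra.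
have B_ones : (P - ones *m Mrow) *m ones = 0.
  by rewrite mulmxBl Rmatrix_ones -mulmxA Mrow_ones mulmx1 subrr.
have v_ones : v *m ones = 0.
  have : x *: (v *m ones) = 0 by rewrite scalemxAl -vB -mulmxA B_ones mulmx0.
  by move/eqP; rewrite scaler_eq0 gt_eqF //= => /eqP.
apply: (left_eig_le _ v_ones v_neq0).
by rewrite -vB mulmxBr mulmxA v_ones mul0mx subr0.
Qed.

Lemma second_eig_Rmatrix_le : second_eig P <= 1 - N%:R^-1.
Proof.
have chP := char_poly_deflate Rmatrix_ones Mrow_ones.
set B := P - _ in chP.
have eigB x : root (char_poly B) x -> x <= 1 - N%:R^-1.
  by rewrite -eigenvalue_root_char; apply: deflated_eig_le.
have Ninv_le1 : (N%:R^-1 : R) <= 1 by rewrite invf_le1 ?ltr0n // ler1n.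
have root_charP x : root (char_poly P) x -> (x == 1) || root (char_poly B) x.
  have := congr1 (root^~ x) chP; rewrite /= !rootM -polyC1 root_XsubC rootX.
  by move=> <- ->; rewrite orbT.
apply: second_eig_le.
- by move=> x /root_charP/orP[/eqP//|/eigB x_le cx]; move: x_le; rewrite leNgt cx.
- by rewrite subr_ge0.
have B_root1 : ~~ root (char_poly B) 1.
  have : (0 : R) < N%:R^-1 by rewrite invr_gt0 ltr0n.
  by move=> Ninv_gt0; apply/negP => /eigB; lra.
have := congr1 (mup 1) chP; rewrite mupMr ?rootX ?oner_eq0 // mupMl //.
by rewrite -polyC1 -['X - _]expr1 mup_XsubCX eqxx => ->.
Qed.

End SpectralGap.

Unset Implicit Arguments.

Theorem mainTheorem6 (R : realType) (N : nat) (hN : (2 <= N)%N) :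
  (forall S : Omega N, 0 <= Mdist R S) /\ (\sum_(S : Omega N) Mdist R S = 1) /\
  (forall S' : Omega N, \sum_(S : Omega N) Mdist R S * Rchain R S S' = Mdist R S') /\
  (forall S S' : Omega N, Mdist R S * Rchain R S S' = Mdist R S' * Rchain R S' S) /\
  spectral_gap (Rmatrix R N) >= (3 * N)%:R^-1.
Proof.
have N_gt0 : (0 < N)%N by apply: leq_trans hN.
split; first exact: Mdist_ge0.
split; first exact: sum_Mdist.
split; first by move=> S'; apply: Mdist_stationary.
split; first exact: Mdist_Rchain_sym.
have := second_eig_Rmatrix_le R N_gt0; rewrite /spectral_gap natrM invfM.
have : (0 : R) < N%:R^-1 by rewrite invr_gt0 ltr0n.
have : (3^-1 : R) < 1 by rewrite invf_lt1 ?ltr1n ?ltr0n.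
nra.
Qed.
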